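(* Let $\mathcal{B}$ be a prime Banach algebra over $\mathbb{R}$ or $\mathbb{C}$, and let $\mathcal{H}_1,\mathcal{H}_2$ be non-empty open subsets of $\mathcal{B}$. Suppose $\mathcal{B}$ admits a continuous automorphism $f$ such that for every $(x,y)\in\mathcal{H}_1\times\mathcal{H}_2$ there exist positive integers $p=p(x,y)$, $q=q(x,y)$ with $$f(x^{p}y^{q})-x^{p}\circ y^{q}\in Z(\mathcal{B}).$$ Then $\mathcal{B}$ is commutative.
   Context: $Z(\mathcal{B})$ denotes the center of $\mathcal{B}$. For $x,y\in\mathcal{B}$, $x\circ y=xy+yx$ and $[x,y]=xy-yx$. $\mathcal{B}$ is prime if $x\mathcal{B}y=\{0\}$ implies $x=0$ or $y=0$. An automorphism of $\mathcal{B}$ is a bijective map $f:\mathcal{B}\to\mathcal{B}$ with $f(x+y)=f(x)+f(y)$ and $f(xy)=f(x)f(y)$ for all $x,y$. *)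

From HB Require Import structures.
From mathcomp Require Import all_boot all_order all_algebra.
From mathcomp Require Import all_classical all_reals all_analysis.
From mathcomp Require Import complex.
Import Order.TTheory GRing.Theory Num.Theory.
Import numFieldNormedType.Exports.
Local Open Scope ring_scope.
Local Open Scope classical_set_scope.

Definition is_banach_algebra_mul {K : numFieldType}
    {B : completeNormedModType K} (mul : B -> B -> B) : Prop :=
  [/\ (forall x y z, mul x (mul y z) = mul (mul x y) z),
      (forall x y z, mul x (y + z) = mul x y + mul x z),
      (forall x y z, mul (x + y) z = mul x z + mul y z),
      (forall (a : K) x y, mul (a *: x) y = a *: mul x y
                           /\ mul x (a *: y) = a *: mul x y)
    & (forall x y, `|mul x y| <= `|x| * `|y|)].

(* x ^ n for n >= 1 : [bpow mul x n] = x * ... * x (n factors), n >= 1 *)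
Definition bpow {B : Type} (mul : B -> B -> B) (x : B) (n : nat) : B :=
  iter n.-1 (mul x) x.

Definition jordan {B : zmodType} (mul : B -> B -> B) (x y : B) : B :=
  mul x y + mul y x.

Definition center {B : Type} (mul : B -> B -> B) : set B :=
  [set z | forall x, mul z x = mul x z].

Definition prime_alg {B : zmodType} (mul : B -> B -> B) : Prop :=
  forall x y, (forall z, mul (mul x z) y = 0) -> x = 0 \/ y = 0.

Definition is_automorphism {B : zmodType} (mul : B -> B -> B) (f : B -> B)
  : Prop :=
  [/\ bijective f,
      (forall x y, f (x + y) = f x + f y)
    & (forall x y, f (mul x y) = mul (f x) (f y))].

Definition commutative_alg {B : Type} (mul : B -> B -> B) : Prop :=
  forall x y, mul x y = mul y x.

Definition theorem2p4_over (K : numFieldType) : Prop :=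
  forall (B : completeNormedModType K) (mul : B -> B -> B),
    is_banach_algebra_mul (K:=K) (B:=B) mul ->
    prime_alg mul ->
  forall (H1 H2 : set B),
    open H1 -> H1 !=set0 -> open H2 -> H2 !=set0 ->
  forall f : B -> B,
    is_automorphism mul f -> continuous f ->
    (forall x y, H1 x -> H2 y ->
       exists p q : nat, [/\ (0 < p)%N, (0 < q)%N &
         center mul (f (mul (bpow mul x p) (bpow mul y q))
                     - jordan mul (bpow mul x p) (bpow mul y q))]) ->
    commutative_alg mul.

(* The pairs (x, y) for which a fixed exponent pair (p, q) works form a closed
   subset of B * B, because f is continuous, and countably many such sets cover
   the open set H1 * H2; by Baire's theorem one of them contains a product of
   two balls.  For fixed y the defect f(x^p y^q) - x^p o y^q is an additive
   function of x^p, so along a line x0 + s a it is a polynomial in s of degree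
   p whose leading coefficient is the defect at a; since Z(B) is a linear
   subspace, iterated finite differences at s = 0, ..., p put that coefficient
   in Z(B).  Doing this in both variables, the condition holds for all small
   a, b; subtracting the instances (a^q, b^p) and (b^q, a^p) cancels the
   Jordan products, so f([a^n, b^n]) and hence [a^n, b^n] is central, with
   n = pq, and by rescaling [x^n, y^n] is central for all x, y.  In a prime
   algebra this forces [x^n, y^n] = 0, then (by the same polynomial argument
   applied to (u + s y)^n) every y^n is central, and finally B is
   commutative. *)

From Pilot Require Import Defs.
From HB Require Import structures.
From mathcomp Require Import all_boot all_order all_algebra.
From mathcomp Require Import all_classical all_reals all_analysis.
From mathcomp Require Import complex.
From mathcomp Require Import ring.
Import Order.TTheory GRing.Theory Num.Theory.
Import numFieldNormedType.Exports.
Local Open Scope ring_scope.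
Local Open Scope classical_set_scope.
Set Implicit Arguments.
Unset Strict Implicit.
Unset Printing Implicit Defensive.

Lemma morph_add0 (V W : zmodType) (phi : V -> W) :
  {morph phi : x y / x + y} -> phi 0 = 0.
Proof. by move=> phiD; apply: (addrI (phi 0)); rewrite -phiD !addr0. Qed.

Definition additive_of (V W : zmodType) (phi : V -> W)
  (phiD : {morph phi : x y / x + y}) : {additive V -> W} :=
  HB.pack phi (GRing.isNmodMorphism.Build V W phi (conj (morph_add0 phiD) phiD)).

(** * Polynomial sequences and finite differences *)

Section PolynomialSequences.
Variable V : zmodType.
Implicit Types (g h : nat -> V) (c : V).

(* [poly_lt n h]: h s = \sum_(i < n) c_i *+ s ^ i for some coefficients c_i;
   [has_lead n h c]: h has degree at most n and coefficient c at s ^ n. *)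
Fixpoint poly_lt n h : Prop :=
  if n is m.+1 then exists c, poly_lt m (fun s => h s - c *+ (s ^ m))
  else forall s, h s = 0.

Definition has_lead n h c := poly_lt n (fun s => h s - c *+ (s ^ n)).

Definition fdiff h s := h s.+1 - h s.

Lemma eq_poly_lt n g h : (forall s, g s = h s) -> poly_lt n g -> poly_lt n h.
Proof. by move=> /funext ->. Qed.

Lemma eq_has_lead n g h c : (forall s, g s = h s) -> has_lead n g c -> has_lead n h c.
Proof. by move=> /funext ->. Qed.

Lemma poly_ltD n g h :
  poly_lt n g -> poly_lt n h -> poly_lt n (fun s => g s + h s).
Proof.
elim: n g h => [|n IH] g h /=; first by move=> g0 h0 s; rewrite g0 h0 addr0.
move=> [a ga] [b hb]; exists (a + b); apply: eq_poly_lt (IH _ _ ga hb) => s.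
by rewrite mulrnDl opprD addrACA.
Qed.

Lemma poly_ltW n h : poly_lt n h -> poly_lt n.+1 h.
Proof. by move=> h_lt; exists 0; apply: eq_poly_lt h_lt => s; rewrite mul0rn subr0. Qed.

Lemma poly_lt_mulX n h : poly_lt n h -> poly_lt n.+1 (fun s => h s *+ s).
Proof.
elim: n h => [|n IH] h /=.
  by move=> h0; exists 0 => s; rewrite h0 mul0rn subr0.
move=> [c hc]; exists c; apply: eq_poly_lt (IH _ hc) => s.
by rewrite mulrnBl -mulrnA expnSr.
Qed.

Lemma poly_lt_sum n (d : nat -> V) :
  poly_lt n (fun s => \sum_(i < n) d i *+ (s ^ i)).
Proof.
elim: n => [|n IH] /=; first by move=> s; rewrite big_ord0.
by exists (d n); apply: eq_poly_lt IH => s; rewrite big_ord_recr addrK.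
Qed.

Lemma has_leadD n g h a b :
  has_lead n g a -> has_lead n h b -> has_lead n (fun s => g s + h s) (a + b).
Proof.
move=> ga hb; apply: eq_poly_lt (poly_ltD ga hb) => s.
by rewrite mulrnDl opprD addrACA.
Qed.

Lemma has_lead_mulX n h c :
  has_lead n h c -> has_lead n.+1 (fun s => h s *+ s) c.
Proof.
move=> /poly_lt_mulX; apply: eq_poly_lt => s.
by rewrite mulrnBl -mulrnA expnSr.
Qed.

Lemma has_leadDl n g h c :
  poly_lt n g -> has_lead n h c -> has_lead n (fun s => g s + h s) c.
Proof.
by move=> g_lt /(poly_ltD g_lt); apply: eq_poly_lt => s; rewrite addrA.
Qed.

Lemma fdiffD g h s : fdiff (fun t => g t + h t) s = fdiff g s + fdiff h s.
Proof. by rewrite /fdiff opprD addrACA. Qed.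

Lemma fdiff_monomial c n s :
  fdiff (fun t => c *+ (t ^ n)) s = \sum_(i < n) c *+ 'C(n, i) *+ (s ^ i).
Proof.
rewrite /fdiff -add1n expnDn -sumrMnr big_ord_recr /= subnn expn0 binn !mul1n addrK.
by apply: eq_bigr => i _; rewrite exp1n mul1n -mulrnA.
Qed.

Lemma has_lead_fdiff_monomial c n :
  has_lead n (fdiff (fun s => c *+ (s ^ n.+1))) (c *+ n.+1).
Proof.
apply: eq_poly_lt (poly_lt_sum n (fun i => c *+ 'C(n.+1, i))) => s.
by rewrite fdiff_monomial big_ord_recr /= binSn addrK.
Qed.

Lemma poly_lt_fdiff n h : poly_lt n.+1 h -> poly_lt n (fdiff h).
Proof.
elim: n h => [|n IH] h [c hc].
  have hE t : h t = c by apply/eqP; rewrite -subr_eq0 -[c]mulr1n -(expn0 t) hc.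
  by move=> s; rewrite /fdiff !hE subrr.
have := poly_ltD (poly_ltW (IH _ hc)) (ex_intro _ _ (has_lead_fdiff_monomial c n)).
by apply: eq_poly_lt => s; rewrite -fdiffD /fdiff !subrK.
Qed.

Lemma has_lead_fdiff n h c : has_lead n.+1 h c -> has_lead n (fdiff h) (c *+ n.+1).
Proof.
move=> /poly_lt_fdiff /has_leadDl /(_ (has_lead_fdiff_monomial c n)).
by apply: eq_has_lead => s; rewrite -fdiffD /fdiff !subrK.
Qed.

Lemma has_lead_iter_fdiff n h c : has_lead n h c -> iter n fdiff h 0 = c *+ n`!.
Proof.
elim: n h c => [|n IH] h c hc.
  by apply/eqP; rewrite -subr_eq0; apply/eqP; exact: (hc 0%N).
by rewrite iterSr (IH _ _ (has_lead_fdiff hc)) -mulrnA factS mulnC.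
Qed.

Lemma iter_fdiff_closed (S : set V) n h m :
  (forall x y, S x -> S y -> S (x - y)) ->
  (forall s, (s <= m + n)%N -> S (h s)) -> S (iter n fdiff h m).
Proof.
move=> SB; elim: n h => [|n IH] h hS; first by apply: hS; rewrite addn0.
rewrite iterSr; apply: IH => s sn; apply: SB; apply: hS; rewrite ?addnS ?ltnS //.
exact: leqW.
Qed.

End PolynomialSequences.

Section AdditiveImage.
Variables (V W : zmodType) (phi : {additive V -> W}).

Lemma poly_lt_additive n h :
  poly_lt n h -> poly_lt n (phi \o h).
Proof.
elim: n h => [|n IH] h /=; first by move=> h0 s; rewrite h0 raddf0.
move=> [c hc]; exists (phi c); apply: eq_poly_lt (IH _ hc) => s.
by rewrite /= raddfB raddfMn.
Qed.

Lemma has_lead_additive n h c :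
  has_lead n h c -> has_lead n (phi \o h) (phi c).
Proof.
by move=> /poly_lt_additive; apply: eq_poly_lt => s; rewrite /= raddfB raddfMn.
Qed.

End AdditiveImage.

Section LeadingCoefficient.
Variables (K : numFieldType) (V : lmodType K).

Definition linear_subspace (S : set V) :=
  (forall x y, S x -> S y -> S (x - y)) /\ (forall (a : K) x, S x -> S (a *: x)).

Lemma linear_subspace_mulrn (S : set V) c n :
  linear_subspace S -> (0 < n)%N -> S (c *+ n) -> S c.
Proof.
move=> [_ SZ] n_gt0 /(SZ n%:R^-1).
by rewrite -[c *+ n]scaler_nat scalerA mulVf ?scale1r // pnatr_eq0 -lt0n.
Qed.

Lemma has_lead_in_subspace (S : set V) n h c : linear_subspace S ->
  has_lead n h c -> (forall s, (s <= n)%N -> S (h s)) -> S c.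
Proof.
move=> SS hc hS; apply: (linear_subspace_mulrn SS (fact_gt0 n)).
by rewrite -(has_lead_iter_fdiff hc); apply: iter_fdiff_closed SS.1 _.
Qed.

End LeadingCoefficient.

(** * Non-unital algebras *)

Definition is_algebra_mul (K : numFieldType) (B : lmodType K) (mul : B -> B -> B) :=
  [/\ associative mul, left_distributive mul +%R, right_distributive mul +%R
    & forall (a : K) x y, mul (a *: x) y = a *: mul x y /\ mul x (a *: y) = a *: mul x y].

Section Algebra.
Variables (K : numFieldType) (B : lmodType K) (mul : B -> B -> B).
Hypothesis mulP : is_algebra_mul mul.

Local Notation "x ^^ n" := (bpow mul x n) (at level 29, left associativity).

Let mulA : associative mul. Proof. by case: mulP. Qed.
Let mulDl : left_distributive mul +%R. Proof. by case: mulP. Qed.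
Let mulDr : right_distributive mul +%R. Proof. by case: mulP. Qed.
Let mulZl a x y : mul (a *: x) y = a *: mul x y.
Proof. by case: mulP => _ _ _ /(_ a x y)[]. Qed.
Let mulZr a x y : mul x (a *: y) = a *: mul x y.
Proof. by case: mulP => _ _ _ /(_ a x y)[]. Qed.

Let lmul x : {additive B -> B} := additive_of (mulDr x).
Let rmul y : {additive B -> B} :=
  additive_of (phi := fun x => mul x y) (fun u v => mulDl u v y).

Lemma mulx0 x : mul x 0 = 0. Proof. exact: raddf0 (lmul x). Qed.
Lemma mul0x y : mul 0 y = 0. Proof. exact: raddf0 (rmul y). Qed.
Lemma mulBr x : {morph mul x : y z / y - z}. Proof. exact: raddfB (lmul x). Qed.
Lemma mulBl x y z : mul (x - y) z = mul x z - mul y z.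
Proof. exact: (raddfB (rmul z) x y). Qed.
Lemma mulMnr x y n : mul x (y *+ n) = mul x y *+ n.
Proof. exact: (raddfMn (lmul x) n y). Qed.
Lemma mulMnl x y n : mul (x *+ n) y = mul x y *+ n.
Proof. exact: (raddfMn (rmul y) n x). Qed.

Lemma bpowSl x n : x ^^ n.+2 = mul x (x ^^ n.+1). Proof. by []. Qed.

Lemma bpowSr x n : x ^^ n.+2 = mul (x ^^ n.+1) x.
Proof. by elim: n => [//|n IH]; rewrite bpowSl [in LHS]IH mulA. Qed.

Lemma bpowD x m n : x ^^ (m.+1 + n.+1) = mul (x ^^ m.+1) (x ^^ n.+1).
Proof. by elim: m => [//|m IH]; rewrite !addSn bpowSl -addSn IH mulA. Qed.

Lemma bpowM x m n : (x ^^ m.+1) ^^ n.+1 = x ^^ (m.+1 * n.+1).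
Proof.
elim: n => [|n IH]; first by rewrite muln1.
rewrite bpowSl IH [in RHS]mulnS.
by case: (m.+1 * n.+1)%N (muln_gt0 m.+1 n.+1) => // k _; rewrite bpowD.
Qed.

Lemma bpowZ a x n : (a *: x) ^^ n.+1 = a ^+ n.+1 *: x ^^ n.+1.
Proof.
elim: n => [|n IH]; first by rewrite expr1.
by rewrite !bpowSl IH mulZr mulZl scalerA -exprSr.
Qed.

(* The derivative of x ^^ n at y in the direction u. *)
Fixpoint dpow (y u : B) n :=
  if n is m.+1 then
    (if m is k.+1 then mul u (y ^^ m) + mul y (dpow y u m) else u)
  else 0.

Lemma dpowS y u n : dpow y u n.+2 = mul u (y ^^ n.+1) + mul y (dpow y u n.+1).
Proof. by []. Qed.

Lemma has_lead_bpow_line u y k :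
  has_lead k (fun s => (u + y *+ s) ^^ k.+1 - y ^^ k.+1 *+ (s ^ k.+1))
           (dpow y u k.+1).
Proof.
elim: k => [|k IH] /=; first by move=> s; rewrite expn1 addrK expn0 subrr.
have top : has_lead k.+1 (fun s => (u + y *+ s) ^^ k.+1) (y ^^ k.+1).
  by exists (dpow y u k.+1).
have := has_leadD (has_lead_additive (lmul u) top)
  (has_lead_mulX (has_lead_additive (lmul y) IH)).
apply: eq_has_lead => s /=; rewrite bpowSl mulDl mulMnl mulBr mulMnr -bpowSl.
by rewrite mulrnBl -mulrnA -expnSr addrA.
Qed.

Lemma has_lead_bpow u y k :
  has_lead k.+1 (fun s => (u + y *+ s) ^^ k.+1) (y ^^ k.+1).
Proof. by exists (dpow y u k.+1); apply: has_lead_bpow_line. Qed.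

Definition comm x y := mul x y - mul y x.

Lemma comm_eq0 x y : comm x y = 0 -> mul x y = mul y x.
Proof. by move/eqP; rewrite subr_eq0 => /eqP. Qed.

Lemma commDl x y w : comm (x + y) w = comm x w + comm y w.
Proof. by rewrite /comm mulDl mulDr opprD addrACA. Qed.

Lemma commMl x y w : comm (mul x y) w = mul x (comm y w) + mul (comm x w) y.
Proof. by rewrite /comm mulBr mulBl !mulA addrA subrK. Qed.

Lemma commZ a b x y : comm (a *: x) (b *: y) = (a * b) *: comm x y.
Proof. by rewrite /comm mulZl mulZr mulZr mulZl !scalerA scalerBr mulrC. Qed.

Lemma linear_subspace_center : linear_subspace (Defs.center mul).
Proof.
split=> [x y Zx Zy z | a x Zx z]; first by rewrite mulBl mulBr Zx Zy.
by rewrite mulZl mulZr Zx.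
Qed.

Lemma linear_subspace_commutant w : linear_subspace [set v | mul v w = mul w v].
Proof.
split=> [x y /= xw yw | a x /= xw]; first by rewrite mulBl mulBr xw yw.
by rewrite mulZl mulZr xw.
Qed.

Lemma linear_subspace0 : linear_subspace [set 0 : B].
Proof. by split=> [x y -> ->|a x ->]; rewrite ?subr0 ?scaler0. Qed.

Lemma dpow_comm y u k : dpow y (comm u y) k.+1 = comm u (y ^^ k.+1).
Proof.
elim: k => [//|k IH]; rewrite dpowS IH /comm mulBl mulBr -!mulA -!bpowSl.
by rewrite [mul y (mul (y ^^ k.+1) u)]mulA -bpowSl addrA subrK.
Qed.

Lemma center_bpow c n : Defs.center mul c -> Defs.center mul (c ^^ n.+1).
Proof.
by move=> Zc; elim: n => [//|n IH] z; rewrite bpowSl -mulA IH mulA Zc -mulA.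
Qed.

Lemma dpow_central c y k :
  Defs.center mul c -> dpow c y k.+2 = mul (c ^^ k.+1) y *+ k.+2.
Proof.
move=> Zc; elim: k => [|k IH]; first by rewrite dpowS /= Zc mulr2n.
by rewrite dpowS IH mulMnr mulA -bpowSl center_bpow // mulrS.
Qed.

Section Prime.
Hypothesis mul_prime : prime_alg mul.

Lemma central_mul_eq0 c r : Defs.center mul c -> mul c r = 0 -> c = 0 \/ r = 0.
Proof. by move=> Zc cr0; apply: mul_prime => z; rewrite Zc -mulA cr0 mulx0. Qed.

Lemma central_comm_bpow_eq0 k :
  (forall x y, Defs.center mul (comm (x ^^ k.+1) (y ^^ k.+1))) ->
  forall x y, comm (x ^^ k.+1) (y ^^ k.+1) = 0.
Proof.
move=> Zcomm x y; set X := x ^^ k.+1; set W := y ^^ k.+1; set c := comm X W.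
have Zc : Defs.center mul c := Zcomm x y.
(* [X X, W] = 2 c X, and X X is itself a k.+1-th power *)
have ZcX : Defs.center mul (mul c X).
  apply: (linear_subspace_mulrn linear_subspace_center (ltn0Sn 1)).
  have := Zcomm (x ^^ 2) y.
  by rewrite bpowM mul2n -addnn bpowD commMl -/X -/W -/c Zc -mulr2n.
have cc0 : mul c c = 0.
  by rewrite {2}/c /comm mulBr mulA ZcX mulA -Zc -mulA subrr.
by have [] := central_mul_eq0 Zc cc0.
Qed.

Lemma central_bpow_of_comm k :
  (forall x y, comm (x ^^ k.+1) (y ^^ k.+1) = 0) ->
  forall y, Defs.center mul (y ^^ k.+1).
Proof.
move=> comm0 y; set Y := y ^^ k.+1.
have dpowY u : mul (dpow y u k.+1) Y = mul Y (dpow y u k.+1).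
  apply: (has_lead_in_subspace (linear_subspace_commutant Y) (has_lead_bpow_line u y k)).
  move=> s _; apply: (linear_subspace_commutant Y).1; first exact/comm_eq0/comm0.
  by rewrite /= mulMnl mulMnr.
(* [_, Y] is a derivation with vanishing square. *)
have dd v : comm (comm v Y) Y = 0 by rewrite -[comm v Y]dpow_comm /comm dpowY subrr.
have dM v w : mul (comm v Y) (comm w Y) = 0.
  apply: (linear_subspace_mulrn linear_subspace0 (ltn0Sn 1)).
  have := dd (mul v w); rewrite !commMl commDl !commMl !dd mulx0 mul0x add0r addr0.
  by rewrite -mulr2n.
have dv0 v : comm v Y = 0.
  suff : forall z, mul (mul (comm v Y) z) (comm v Y) = 0 by move/mul_prime => [].
  by move=> z; have := dM v (mul z v); rewrite commMl mulDr !mulA dM mul0x addr0.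
by move=> z; apply/esym/comm_eq0/dv0.
Qed.

Lemma bpow_central_neq0 c n : Defs.center mul c -> c != 0 -> c ^^ n.+1 != 0.
Proof.
move=> Zc c_neq0; elim: n => [//|n IH]; rewrite bpowSl.
by apply/eqP => /(central_mul_eq0 Zc)[]; apply/eqP.
Qed.

Lemma bpow_eq0_pred k : (forall x, x ^^ k.+2 = 0) -> forall x, x ^^ k.+1 = 0.
Proof.
move=> pow0 y.
have dpow0 u : dpow y u k.+2 = 0.
  apply: (has_lead_in_subspace linear_subspace0 (has_lead_bpow_line u y k.+1)) => s _.
  by rewrite /= !pow0 mul0rn subr0.
suff : forall u, mul (mul (y ^^ k.+1) u) (y ^^ k.+1) = 0 by move/mul_prime => [].
move=> u; have := congr1 (mul (y ^^ k.+1)) (dpow0 u).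
by rewrite dpowS mulDr mulx0 [mul _ (mul y _)]mulA -bpowSr pow0 mul0x addr0 mulA.
Qed.

Lemma nilpotent_trivial k : (forall x, x ^^ k.+1 = 0) -> forall x : B, x = 0.
Proof. by elim: k => [|k IH] pow0 x; [exact: pow0 | exact/IH/bpow_eq0_pred]. Qed.

Lemma commutative_of_central_bpow k :
  (forall y, Defs.center mul (y ^^ k.+1)) -> commutative_alg mul.
Proof.
case: k => [Zpow x y|k Zpow]; first exact: Zpow.
have [[x x_neq0]|all0] := pselect (exists x, x ^^ k.+2 != 0); last first.
  have pow0 x : x ^^ k.+2 = 0 by apply: contrapT => /eqP ?; apply: all0; exists x.
  by move=> x y; rewrite (nilpotent_trivial pow0 x) (nilpotent_trivial pow0 y).
set c := x ^^ k.+2; have Zc : Defs.center mul c := Zpow x.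
set d := c ^^ k.+1; have Zd : Defs.center mul d by apply: center_bpow.
have d_neq0 : d != 0 by apply: bpow_central_neq0.
(* up to the factor k.+2, d y is the leading coefficient of the polynomial
   s |-> (y + c *+ s) ^^ k.+2 - (c *+ s) ^^ k.+2, whose values are central *)
have Zdy y : Defs.center mul (mul d y).
  apply: (linear_subspace_mulrn linear_subspace_center (ltn0Sn k.+1)).
  rewrite -dpow_central //.
  apply: (has_lead_in_subspace linear_subspace_center (has_lead_bpow_line y c k.+1)).
  move=> s _; apply: linear_subspace_center.1 (Zpow _) _.
  by move=> w; rewrite mulMnl mulMnr Zpow.
move=> y z; apply: comm_eq0.
have : mul d (comm y z) = 0 by rewrite /comm mulBr !mulA Zdy mulA -Zd subrr.
by move/(central_mul_eq0 Zd) => [d0|//]; rewrite d0 eqxx in d_neq0.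
Qed.

Theorem commutative_of_central_comm_bpow k :
  (forall x y, Defs.center mul (comm (x ^^ k.+1) (y ^^ k.+1))) ->
  commutative_alg mul.
Proof.
move=> /central_comm_bpow_eq0 /central_bpow_of_comm.
exact: commutative_of_central_bpow.
Qed.

End Prime.

End Algebra.

(** * From a local to a global condition *)

Lemma center_of_morph_center (B : Type) (mul : B -> B -> B) (f : B -> B) w :
  {morph f : x y / mul x y} -> injective f ->
  Defs.center mul (f w) -> Defs.center mul w.
Proof. by move=> fM f_inj Zfw z; apply: f_inj; rewrite !fM Zfw. Qed.

Definition jordan_defect (B : zmodType) (mul : B -> B -> B) (f : B -> B)
    p q (x y : B) :=
  f (mul (bpow mul x p) (bpow mul y q)) - jordan mul (bpow mul x p) (bpow mul y q).

Section LocalToGlobal.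
Variables (K : numFieldType) (B : normedModType K) (mul : B -> B -> B).
Hypotheses (mulP : is_algebra_mul mul)
  (mul_norm : forall x y, `|mul x y| <= `|x| * `|y|).

Local Notation "x ^^ n" := (bpow mul x n) (at level 29, left associativity).

Lemma bpow_norm_le x k : `|x| <= 1 -> `|x ^^ k.+1| <= `|x|.
Proof.
move=> x_le1; elim: k => [//|k IH]; rewrite bpowSl.
apply: le_trans (mul_norm _ _) _; rewrite -[leRHS]mulr1.
by apply: ler_pM => //; exact: le_trans IH x_le1.
Qed.

Lemma ball_extrapolation (S : set B) (phi : {additive B -> B}) n x0 (r : K) :
  linear_subspace S -> (forall x, `|x0 - x| < r -> S (phi (x ^^ n.+1))) ->
  forall a, `|a| * n.+1%:R < r -> S (phi (a ^^ n.+1)).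
Proof.
move=> SS Sball a ar.
apply: (has_lead_in_subspace SS (has_lead_additive phi (has_lead_bpow mulP x0 a n))).
move=> s sn; apply: Sball; rewrite opprD addrA subrr add0r normrN normrMn.
by apply: le_lt_trans ar; rewrite -[`|a| *+ s]mulr_natr ler_wpM2l ?ler_nat.
Qed.

Section LocalCondition.
Variable f : B -> B.
Hypotheses (fD : {morph f : x y / x + y}) (fM : {morph f : x y / mul x y})
  (f_inj : injective f).
Variables (p q : nat) (x0 y0 : B) (r : K).
Hypotheses (r_gt0 : 0 < r) (local : forall x y, `|x0 - x| < r -> `|y0 - y| < r ->
  Defs.center mul (jordan_defect mul f p.+1 q.+1 x y)).

Let mulDl : left_distributive mul +%R. Proof. by case: mulP. Qed.
Let mulDr : right_distributive mul +%R. Proof. by case: mulP. Qed.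

Lemma jordan_defect_central a b : `|a| * p.+1%:R < r -> `|b| * q.+1%:R < r ->
  Defs.center mul (jordan_defect mul f p.+1 q.+1 a b).
Proof.
move=> ar br.
have defectlD Q : {morph (fun v => f (mul v Q) - jordan mul v Q) : v w / v + w}.
  by move=> v w; rewrite /jordan mulDl mulDr fD addrACA opprD addrACA.
have defectrD P : {morph (fun v => f (mul P v) - jordan mul P v) : v w / v + w}.
  by move=> v w; rewrite /jordan mulDl mulDr fD addrACA opprD addrACA.
have near_x y : `|y0 - y| < r -> Defs.center mul (jordan_defect mul f p.+1 q.+1 a y).
  move=> yr; apply: (ball_extrapolation (phi := additive_of (defectlD (y ^^ q.+1)))
    (x0 := x0) (linear_subspace_center mulP)) ar => x xr.
  exact: local xr yr.
exact: (ball_extrapolation (phi := additive_of (defectrD (a ^^ p.+1)))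
  (linear_subspace_center mulP) near_x br).
Qed.

Let N : K := (p.+1 + q.+1)%:R.
Let small (a : B) := `|a| <= 1 /\ `|a| * N < r.

Let small_bpow a k m : small a -> (m <= p.+1 + q.+1)%N -> `|a ^^ k.+1| * m%:R < r.
Proof.
move=> [a_le1 aN] mN; apply: le_lt_trans aN.
by apply: ler_pM; rewrite ?bpow_norm_le ?ler_nat.
Qed.

Let scale_small x : exists2 l : K, l != 0 & small (l *: x).
Proof.
have N_gt0 : 0 < N by rewrite ltr0n addn_gt0.
have Nr_gt0 : 0 < N + r by rewrite addr_gt0.
have x1_gt0 : 0 < `|x| + 1 by rewrite ltr_wpDl.
(* t <= 1 and t * N < r *)
pose t := r / (N + r); have t_gt0 : 0 < t by rewrite divr_gt0.
exists (t / (`|x| + 1)); first by rewrite mulf_neq0 ?invr_eq0 // gt_eqF.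
have lx_le : `|t / (`|x| + 1) *: x| <= t.
  rewrite normrZ ger0_norm; last by rewrite divr_ge0 // ltW.
  rewrite mulrAC ler_pdivrMr // ler_wpM2l ?lerDl //; exact: ltW.
split; first by apply: le_trans lx_le _; rewrite ler_pdivrMr // mul1r lerDr ltW.
apply: le_lt_trans (ler_wpM2r (ltW N_gt0) lx_le) _.
by rewrite mulrAC ltr_pdivrMr // ltr_pM2l // ltrDl.
Qed.

Lemma central_comm_bpow_small a e : small a -> small e ->
  Defs.center mul (comm mul (a ^^ (q.+1 * p.+1)) (e ^^ (q.+1 * p.+1))).
Proof.
move=> sa se.
have D1 := jordan_defect_central (small_bpow q sa (leq_addr _ _))
  (small_bpow p se (leq_addl _ _)).
have D2 := jordan_defect_central (small_bpow q se (leq_addr _ _))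
  (small_bpow p sa (leq_addl _ _)).
apply: (center_of_morph_center fM f_inj).
have fB : {morph f : u v / u - v} := raddfB (additive_of fD).
have := (linear_subspace_center mulP).1 _ _ D1 D2.
rewrite /jordan_defect /jordan !(bpowM mulP) [(p.+1 * q.+1)%N]mulnC /comm fB.
(* the two Jordan products are equal and cancel *)
by rewrite [_ + mul _ _ in X in _ - X]addrC opprB addrA subrK.
Qed.

Lemma central_comm_bpow x y :
  Defs.center mul (comm mul (x ^^ (q.+1 * p.+1)) (y ^^ (q.+1 * p.+1))).
Proof.
rewrite mulSn addSn; set k := (p + q * p.+1)%N.
have [l l_neq0 sl] := scale_small x; have [u u_neq0 su] := scale_small y.
have := central_comm_bpow_small sl su; rewrite mulSn addSn -/k !(bpowZ mulP).
move=> /((linear_subspace_center mulP).2 (l ^+ k.+1 * u ^+ k.+1)^-1).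
by rewrite (commZ mulP) scalerA mulVf ?scale1r // mulf_neq0 // expf_neq0.
Qed.

Theorem commutative_of_local_jordan_defect : prime_alg mul -> commutative_alg mul.
Proof.
move=> mul_prime.
apply: (commutative_of_central_comm_bpow mulP mul_prime (k := (p + q * p.+1)%N)).
by move=> x y; rewrite -addSn -mulSn; exact: central_comm_bpow.
Qed.

End LocalCondition.

End LocalToGlobal.

(** * Completeness of B * B and Baire's theorem *)

Lemma cauchy_fst (U V : uniformType) (F : set_system (U * V)) :
  Filter F -> cauchy F -> cauchy (fst @ F).
Proof.
move=> FF Fc A entA.
move: (Fc _ (prod_entP entA entourageT)) => [[P Q] /= [FP FQ] PQ].
change (filter_prod (fst @ F) (fst @ F) A).
exists (fst @` P, fst @` Q) => /=.
  by split; [apply: filterS FP | apply: filterS FQ] => z ?; exists z.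
by case=> _ _ [/= [x Px <-] [y Qy <-]]; have [] := PQ (x, y) (conj Px Qy).
Qed.

Lemma cauchy_snd (U V : uniformType) (F : set_system (U * V)) :
  Filter F -> cauchy F -> cauchy (snd @ F).
Proof.
move=> FF Fc A entA.
move: (Fc _ (prod_entP entourageT entA)) => [[P Q] /= [FP FQ] PQ].
change (filter_prod (snd @ F) (snd @ F) A).
exists (snd @` P, snd @` Q) => /=.
  by split; [apply: filterS FP | apply: filterS FQ] => z ?; exists z.
by case=> _ _ [/= [x Px <-] [y Qy <-]]; have [] := PQ (x, y) (conj Px Qy).
Qed.

Lemma prod_cauchy_cvg (U V : completeType) (F : set_system (U * V)) :
  ProperFilter F -> cauchy F -> exists l : U * V, F --> l.
Proof.
move=> FF Fc.
have Fl1 := @cauchy_cvg U (fst @ F) (fmap_proper_filter _ FF) (cauchy_fst FF Fc).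
have Fl2 := @cauchy_cvg V (snd @ F) (fmap_proper_filter _ FF) (cauchy_snd FF Fc).
exists (lim (fst @ F), lim (snd @ F)); pose proof (cvg_pair Fl1 Fl2) as Fl.
move=> A /Fl; rewrite !nbhs_simpl.
by congr F; apply/funext => -[].
Qed.

(* Over a numFieldType the order is partial, so [d1 * d2 / (d1 + d2)] stands in
   for the minimum. *)
Lemma exists_pos_le2 (K : numFieldType) (d1 d2 : K) : 0 < d1 -> 0 < d2 ->
  exists2 d, 0 < d & d <= d1 /\ d <= d2.
Proof.
move=> d1_gt0 d2_gt0; have d12_gt0 : 0 < d1 + d2 by rewrite addr_gt0.
exists (d1 * d2 / (d1 + d2)); first by rewrite divr_gt0 // mulr_gt0.
split; rewrite ler_pdivrMr //; first by rewrite ler_pM2l // lerDr ltW.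
by rewrite [d1 * d2]mulrC ler_pM2l // lerDl ltW.
Qed.

Definition archimedean_inv (K : numFieldType) :=
  forall e : K, 0 < e -> exists n : nat, n.+1%:R^-1 < e.

Section Baire.
Variables (K : numFieldType) (U : normedModType K).
Hypothesis K_archi : archimedean_inv K.
Hypothesis U_complete :
  forall F : set_system U, ProperFilter F -> cauchy F -> exists l : U, F --> l.

Lemma cvg_nested_balls (a : nat -> U) (r : nat -> K) :
  (forall n m, (n <= m)%N -> `|a n - a m| <= r n) ->
  (forall n, 0 < r n) -> (forall e, 0 < e -> exists n, r n < e) ->
  exists l, forall n, `|a n - l| < r n + r n.
Proof.
move=> ar r_gt0 r_small.
have a_cauchy : cauchy (a @ \oo).
  apply: cauchy_exP => e e0; have [n rne] := r_small e e0.
  exists (a n), n => // m nm /=; rewrite -ball_normE /=.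
  exact: le_lt_trans (ar n m nm) rne.
have [l al] := U_complete (fmap_proper_filter a eventually_filter) a_cauchy.
exists l => n; have /cvgrPdist_lt/(_ _ (r_gt0 n)) [N _ lN] := al.
apply: le_lt_trans (ler_distD (a (maxn N n)) _ _) _.
by rewrite ler_ltD // ?ar ?leq_maxr // distrC lN //= leq_maxl.
Qed.

Lemma ball_avoiding_closed (F : set U) (z : U) (r b : K) : closed F ->
  ~ (exists w (e : K), 0 < e /\ ball w e `<=` F) -> 0 < r -> 0 < b ->
  exists wd : U * {posnum K}, [/\ wd.2%:num <= b, `|z - wd.1| + wd.2%:num <= r
    & ball wd.1 (wd.2%:num + wd.2%:num) `<=` ~` F].
Proof.
move=> F_closed no_ball r_gt0 b_gt0; have r2_gt0 : 0 < r / 2 by rewrite divr_gt0.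
have [w zw Fw] : exists2 w, ball z (r / 2) w & ~ F w.
  apply: contrapT => all_F; apply: no_ball; exists z, (r / 2).
  by split => // w zw; apply: contrapT => Fw; apply: all_F; exists w.
have [rho rho_gt0 rhoF] : exists2 rho : K, 0 < rho & ball w rho `<=` ~` F.
  have /nbhs_ballP[rho rho_gt0 wF] : nbhs w (~` F).
    exact: open_nbhs_nbhs (conj (closed_openC F_closed) Fw).
  by exists rho.
have [d1 d1_gt0 [d1rho d1r]] :=
  exists_pos_le2 (divr_gt0 rho_gt0 (ltr0Sn K 1)) r2_gt0.
have [d d_gt0 [dd1 db]] := exists_pos_le2 d1_gt0 b_gt0.
exists (w, PosNum d_gt0); split => //=.
  rewrite -ball_normE /= in zw; rewrite [leRHS](splitr r) ltW // ltr_leD //.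
  exact: le_trans dd1 d1r.
apply: subset_trans rhoF; apply: le_ball.
by rewrite [leRHS](splitr rho) lerD // (le_trans dd1 d1rho).
Qed.

Theorem baire_ball (F : nat -> set U) (z0 : U) (r0 : K) :
  (forall n, closed (F n)) -> 0 < r0 -> (forall z, ball z0 r0 z -> exists n, F n z) ->
  exists n z (r : K), 0 < r /\ ball z r `<=` F n.
Proof.
move=> F_closed r0_gt0 cover; apply: contrapT => no_ball.
have inv_gt0 n : 0 < n.+1%:R^-1 :> K by rewrite invr_gt0.
have shrink (nz : nat * U) (r : {posnum K}) : exists wd : U * {posnum K},
    [/\ wd.2%:num <= nz.1.+1%:R^-1, `|nz.2 - wd.1| + wd.2%:num <= r%:num
       & ball wd.1 (wd.2%:num + wd.2%:num) `<=` ~` F nz.1].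
  apply: ball_avoiding_closed (F_closed nz.1) _ (gt0 r) (inv_gt0 nz.1).
  by move=> in_F; apply: no_ball; exists nz.1.
have [next nextP] := choice (fun nzr : nat * U * {posnum K} => shrink nzr.1 nzr.2).
have r02_gt0 : 0 < r0 / 2 by rewrite divr_gt0.
pose fix ar n := if n is m.+1 then next (m, (ar m).1, (ar m).2)
                 else (z0, PosNum r02_gt0).
pose a n := (ar n).1; pose r n := (ar n).2%:num.
have step n : [/\ r n.+1 <= n.+1%:R^-1, `|a n - a n.+1| + r n.+1 <= r n
                & ball (a n.+1) (r n.+1 + r n.+1) `<=` ~` F n].
  exact: nextP (n, a n, (ar n).2).
have nested n k : `|a n - a (k + n)%N| + r (k + n)%N <= r n.
  elim: k => [|k IH]; first by rewrite add0n subrr normr0 add0r.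
  have [_ ak _] := step (k + n)%N; rewrite addSn; apply: le_trans IH.
  apply: le_trans (lerD (ler_distD (a (k + n)%N) _ _) (lexx _)) _.
  by rewrite -addrA lerD2l.
have dist_le n m : (n <= m)%N -> `|a n - a m| <= r n.
  by move=> /subnK <-; apply: le_trans (nested n (m - n)%N); rewrite lerDl /r.
have r_small e : 0 < e -> exists n, r n < e.
  move=> /K_archi[n ne]; exists n.+1; have [rn _ _] := step n.
  exact: le_lt_trans rn ne.
have [l al] := cvg_nested_balls dist_le (fun n => gt0 (ar n).2) r_small.
have [n Fnl] : exists n, F n l.
  by apply: cover; rewrite -ball_normE /=; have := al 0%N; rewrite /r /= -splitr.
have [_ _ /(_ l)] := step n; apply => //; rewrite -ball_normE; exact: al.
Qed.
End Baire.

(** * Continuity of the defect *)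

Section Continuity.
Variables (K : numFieldType) (B : normedModType K) (mul : B -> B -> B).
Hypotheses (mulP : is_algebra_mul mul)
  (mul_norm : forall x y, `|mul x y| <= `|x| * `|y|).

Lemma mul_cvg x y : mul z.1 z.2 @[z --> (x, y)] --> mul x y.
Proof.
apply/cvgrPdist_lt => e e0.
pose M := `|x| + `|y| + 1.
have M0 : 0 < M by rewrite ltr_pwDr // addr_ge0.
have eM0 : 0 < e + M by rewrite addr_gt0.
pose d := e / (e + M).
have d0 : 0 < d by rewrite divr_gt0.
have d1 : d <= 1 by rewrite ler_pdivrMr // mul1r lerDl ltW.
have dM : d * M < e by rewrite mulrAC ltr_pdivrMr // ltr_pM2l // ltrDr.
exists (ball x d, ball y d); first by split; exact: nbhsx_ballx.
case=> a b [/= xa yb]; rewrite -ball_normE /= in xa yb.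
have -> : mul x y - mul a b = mul (x - a) y + mul a (y - b).
  by rewrite (mulBl mulP) (mulBr mulP) addrA subrK.
have na : `|a| <= `|x| + 1.
  rewrite -[a](subKr x) (le_trans (ler_normB _ _)) // lerD2l.
  exact: le_trans (ltW xa) d1.
apply: le_lt_trans (ler_normD _ _) _; apply: le_lt_trans dM.
apply: le_trans (lerD (mul_norm _ _) (mul_norm _ _)) _.
have -> : d * M = d * `|y| + (`|x| + 1) * d by rewrite /M; ring.
by apply: lerD; [apply: ler_wpM2r | apply: ler_pM]; rewrite // ltW.
Qed.

Lemma bpow_continuous n : continuous (fun x => bpow mul x n).
Proof.
case: n => [|n]; first by move=> x; exact: cvg_id.
elim: n => [|n IH]; first by move=> x; exact: cvg_id.
move=> x; apply: (@continuous2_cvg _ _ _ _ _ _ id (bpow mul ^~ n.+1) mul).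
- exact: mul_cvg.
- exact: cvg_id.
- exact: IH.
Qed.

Lemma continuous_mul (T : topologicalType) (g h : T -> B) :
  continuous g -> continuous h -> continuous (fun t => mul (g t) (h t)).
Proof.
move=> gc hc t; apply: (@continuous2_cvg _ _ _ _ _ _ g h mul).
- exact: mul_cvg.
- exact: gc.
- exact: hc.
Qed.

Lemma jordan_defect_continuous (f : B -> B) p q : continuous f ->
  continuous (fun z : B * B => jordan_defect mul f p q z.1 z.2).
Proof.
move=> f_cont.
have xp : continuous (fun z : B * B => bpow mul z.1 p).
  move=> z; apply: (@continuous_comp _ _ _ fst (bpow mul ^~ p)).
    exact: cvg_fst.
  exact: bpow_continuous.
have yq : continuous (fun z : B * B => bpow mul z.2 q).
  move=> z; apply: (@continuous_comp _ _ _ snd (bpow mul ^~ q)).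
    exact: cvg_snd.
  exact: bpow_continuous.
have xy : continuous (fun z : B * B => mul (bpow mul z.1 p) (bpow mul z.2 q)).
  exact: continuous_mul xp yq.
have yx : continuous (fun z : B * B => mul (bpow mul z.2 q) (bpow mul z.1 p)).
  exact: continuous_mul yq xp.
have -> : (fun z : B * B => jordan_defect mul f p q z.1 z.2) =
    f \o (fun z => mul (bpow mul z.1 p) (bpow mul z.2 q)) -
    ((fun z => mul (bpow mul z.1 p) (bpow mul z.2 q)) +
     (fun z => mul (bpow mul z.2 q) (bpow mul z.1 p))) by [].
move=> z; apply: continuousB; first exact: continuous_comp (xy z) (f_cont _).
exact: continuousD (xy z) (yx z).
Qed.

Lemma closed_central (T : topologicalType) (g : T -> B) :
  continuous g -> closed [set t | Defs.center mul (g t)].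
Proof.
move=> g_cont.
have -> : [set t | Defs.center mul (g t)] =
    \bigcap_(w in setT) ((fun t => comm mul (g t) w) @^-1` [set 0]).
  apply/seteqP; split=> [t Zt w _|t Zt w]; first by rewrite /= /comm Zt subrr.
  exact: comm_eq0 (Zt w I).
apply: closed_bigI => w _; apply: preimage_closed; last first.
  by apply: accessible_closed_set1; apply: hausdorff_accessible.
have -> : (fun t => comm mul (g t) w) = (fun t => mul (g t) w) - (fun t => mul w (g t)).
  by [].
have cst : continuous (fun _ : T => w) by move=> t; exact: cvg_cst.
by move=> t _; apply: continuousB; apply: continuous_mul.
Qed.

End Continuity.

Lemma realType_archimedean (R : realType) : archimedean_inv R.
Proof.
move=> e e_gt0; exists (Num.truncn e^-1).
by rewrite -ltf_pV2 ?(posrE, divr_gt0) ?invrK ?truncnS_gt // invr_gt0.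
Qed.

Local Open Scope complex_scope.

Lemma complex_archimedean (R : realType) : archimedean_inv R[i].
Proof.
case=> a b; rewrite ltcE /= => /andP[/eqP b0 a_gt0].
have [n na] := realType_archimedean a_gt0; exists n.
have -> : (n.+1%:R : R[i])^-1 = (n.+1%:R^-1)%:C by rewrite fmorphV rmorph_nat.
by rewrite ltcE /= b0 eqxx na.
Qed.

Lemma theorem2p4_over_archimedean (K : numFieldType) :
  archimedean_inv K -> theorem2p4_over K.
Proof.
move=> K_archi B mul [mulA mulDl mulDr mulZ mul_norm] mul_prime H1 H2.
move=> H1_open [x1 H1x1] H2_open [y1 H2y1] f [/bij_inj f_inj fD fM] f_cont defect.
have mulP : is_algebra_mul mul by split.
have /nbhs_ballP[r1 r1_gt0 ball_H1] : nbhs x1 H1 by apply: open_nbhs_nbhs.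
have /nbhs_ballP[r2 r2_gt0 ball_H2] : nbhs y1 H2 by apply: open_nbhs_nbhs.
have [r0 r0_gt0 [r01 r02]] := exists_pos_le2 r1_gt0 r2_gt0.
(* the n-th set of the Baire cover is that of the n-th exponent pair *)
pose pq n := odflt (0, 0)%N (unpickle n).
pose C n := [set z : B * B |
  Defs.center mul (jordan_defect mul f (pq n).1.+1 (pq n).2.+1 z.1 z.2)].
have C_closed n : closed (C n).
  exact (closed_central mulP mul_norm (jordan_defect_continuous mulP mul_norm f_cont)).
have cover (z : B * B) : ball (x1, y1) r0 z -> exists n, C n z.
  case: z => x y [/= xr yr].
  have [[|p] [[|q] [//= _ _ Zd]]] :=
    defect x y (ball_H1 _ (le_ball r01 xr)) (ball_H2 _ (le_ball r02 yr)).
  by exists (pickle (p, q)); rewrite /C /pq /= pickleK.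
have [n [[x0 y0] [r [r_gt0 local]]]] :=
  baire_ball K_archi (@prod_cauchy_cvg B B) C_closed r0_gt0 cover.
apply: (commutative_of_local_jordan_defect mulP mul_norm fD fM f_inj
  (x0 := x0) (y0 := y0) r_gt0 _ mul_prime).
by move=> x y xr yr; apply: (local (x, y)); split; rewrite -ball_normE.
Qed.

Theorem theorem2p4 (R : realType) :
  theorem2p4_over R /\ theorem2p4_over R[i].
Proof.
split; apply: theorem2p4_over_archimedean.
- exact: realType_archimedean.
- exact: complex_archimedean.
Qed.
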